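(* Fix $T>0$ and $\lambda>0$. A single indivisible item is offered over the horizon $[0,T]$. The number of buyers is Poisson with mean $\lambda T$; conditional on this number, buyers' arrival times $\alpha_i$ are i.i.d. uniform on $[0,T]$ and their valuations $v_i$ are i.i.d. uniform on $[0,1]$, independent of the arrivals. Let $w:[0,1]\to[0,T]\cup\{\infty\}$ be a regular threshold time function and suppose every buyer $i$ uses the value-based threshold strategy $\sigma_w$, i.e. chooses target purchase time $\tau_i=\max\{w(v_i),\alpha_i\}$. Let $\tau^*=\min_i \tau_i$ be the sale time (with $\tau^*=\infty$ if there are no buyers or all $\tau_i=\infty$). Then $$\Pr(\tau^*>t)=e^{-\lambda t\,(1-w^{-1}(t))}\qquad\text{for all } t\in[0,T],$$ where $w^{-1}(t):=\inf\{v\in[0,1]: w(v)\le t\}$ (with $\inf\emptyset=1$).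
   Context: A threshold time function is a map $w:[0,1]\to[0,T]\cup\{\infty\}$. Define $\underline v_w=\inf\{v: w(v)<\infty\}$ and $\overline v_w=\sup\{v: w(v)>0\}$. The function $w$ is called regular if: (i) $w$ is non-increasing on $[0,1]$; (ii) $w$ is strictly decreasing on $[\underline v_w,\overline v_w]\cap[0,1]$; (iii) $w$ is continuous on $(\underline v_w,\overline v_w]\cap[0,1]$; (iv) $w$ is right-differentiable on $[\underline v_w,\overline v_w)\cap[0,1]$. The value-based threshold (VBT) strategy induced by $w$ is $\sigma_w(v,\alpha)=\max\{w(v),\alpha\}$ for $v\in[0,1]$, $\alpha\in[0,T]$ (with $\max\{\infty,\alpha\}=\infty$). *)

From HB Require Import structures.
From mathcomp Require Import all_boot all_order all_algebra.
From mathcomp Require Import all_classical all_reals all_analysis.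

Set Implicit Arguments.
Unset Strict Implicit.
Unset Printing Implicit Defensive.

Import Order.TTheory GRing.Theory Num.Theory.
Import numFieldNormedType.Exports.

Local Open Scope classical_set_scope.
Local Open Scope ring_scope.

Section defs.
Context {R : realType}.
Local Open Scope ereal_scope.

(* A threshold time function w : [0,1] -> [0,T] \cup {oo}; oo is +oo.
   Only the values of w on [0,1] matter. *)
Definition threshold_time_fun (T : R) (w : R -> \bar R) : Prop :=
  forall v : R, (0 <= v <= 1)%R -> w v = +oo \/ (0 <= w v /\ w v <= T%:E).

Definition vlow (w : R -> \bar R) : \bar R :=
  ereal_inf [set v%:E | v in [set v : R | (0 <= v <= 1)%R /\ w v < +oo]].

Definition vhigh (w : R -> \bar R) : \bar R :=
  ereal_sup [set v%:E | v in [set v : R | (0 <= v <= 1)%R /\ 0 < w v]].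

Definition regular (w : R -> \bar R) : Prop :=
  (forall u v : R, (0 <= u)%R -> (u <= v)%R -> (v <= 1)%R -> w v <= w u) /\
  (forall u v : R, (0 <= u)%R -> (v <= 1)%R -> vlow w <= u%:E ->
       v%:E <= vhigh w -> (u < v)%R -> w v < w u) /\
  (forall v : R, (0 <= v <= 1)%R -> vlow w < v%:E -> v%:E <= vhigh w ->
       w @ (within `[0%R, 1%R] (nbhs v)) --> w v) /\
  (forall v : R, (0 <= v <= 1)%R -> vlow w <= v%:E -> v%:E < vhigh w ->
       w v \is a fin_num /\
       (\forall h \near (0%R)^'+, w (v + h)%R \is a fin_num) /\
       exists l : R,
         (fun h : R => (fine (w (v + h)%R) - fine (w v)) / h)%R
           @ (0%R)^'+ --> l).

Definition winv (w : R -> \bar R) (t : R) : R :=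
  if `[< exists v : R, (0 <= v <= 1)%R /\ w v <= t%:E >]
  then inf [set v : R | (0 <= v <= 1)%R /\ w v <= t%:E]
  else 1%R.

Definition vbt (w : R -> \bar R) (v alpha : R) : \bar R :=
  maxe (w v) alpha%:E.

Definition sale_time (n : nat) (tau : nat -> \bar R) : \bar R :=
  \big[mine/+oo]_(i < n) tau i.

End defs.

From HB Require Import structures.
From mathcomp Require Import all_boot all_order all_algebra.
From mathcomp Require Import all_classical all_reals all_analysis.
From mathcomp Require Import ring.

(* Condition on the number n of buyers.  Buyer i has not bought by time t iff
   he arrives after t, or arrives by t with w(v_i) > t, i.e. with a value
   outside the sublevel set {v | w v <= t}; as w is non-increasing, this set
   is an interval of length 1 - w^{-1}(t).  Splitting according to which
   buyers arrive by t writes the event as a disjoint union of product events,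
   so by independence it has probability q^n with
   q = 1 - (t/T)(1 - w^{-1}(t)).  Averaging q^N over N ~ Poisson(lam T) gives
   exp(-lam T (1 - q)) = exp(-lam t (1 - w^{-1}(t))). *)

Set Implicit Arguments.
Unset Strict Implicit.
Unset Printing Implicit Defensive.

Import Order.TTheory GRing.Theory Num.Theory.
Import numFieldNormedType.Exports.

Local Open Scope classical_set_scope.
Local Open Scope ring_scope.

Section uniform_prob_itv.
Context (R : realType) (a b : R) (ab : a < b).

Lemma uniform_probE (U : set R) : measurable U ->
  uniform_prob ab U = (((b - a)^-1)%:E * lebesgue_measure (U `&` `[a, b]))%E.
Proof.
move=> mU; rewrite /uniform_prob integral_uniform_pdf.
rewrite (eq_integral (fun=> ((b - a)^-1)%:E)); last first.
  by move=> x; rewrite inE => -[_]; rewrite /= in_itv /uniform_pdf /= => ->.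
by rewrite integral_cst //; exact: measurableI.
Qed.

Lemma uniform_prob_itvNy (x : R) : a <= x <= b ->
  uniform_prob ab `]-oo, x]%classic = ((x - a) / (b - a))%:E.
Proof.
move=> /andP[ax xb]; rewrite uniform_probE //.
have -> : `]-oo, x] `&` `[a, b] = `[a, x]%classic :> set R.
  apply/seteqP; split => y /=; rewrite !in_itv /=; first by case=> -> /andP[->].
  by move=> /andP[-> yx]; rewrite yx (le_trans yx xb).
rewrite lebesgue_measure_itv /= lte_fin -EFinD mulrC.
have [_|xa] := ltrP a x; first by rewrite EFinM.
have -> : x = a by apply/le_anti; rewrite xa ax.
by rewrite subrr mulr0 mule0.
Qed.

Lemma uniform_prob_itv_right (c : bool) (x : R) : a <= x <= b ->
  uniform_prob ab [set` Interval (BSide c x) (BRight b)] =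
  ((b - x) / (b - a))%:E.
Proof.
move=> /andP[ax xb]; rewrite uniform_probE // setIidl; last first.
  move=> y /=; rewrite !in_itv /=; case: c => /= /andP[xy ->]; rewrite andbT.
    exact: le_trans xy.
  exact: le_trans (ltW xy).
rewrite lebesgue_measure_itv /= lte_fin -EFinD mulrC.
have [_|bx] := ltrP x b; first by case: c; rewrite EFinM.
have -> : x = b by apply/le_anti; rewrite xb bx.
by case: c; rewrite subrr mulr0 mule0.
Qed.

End uniform_prob_itv.

Section sublevel.
Context (R : realType) (w : R -> \bar R) (t : R).

Definition sublevel : set R := [set v | 0 <= v <= 1 /\ (w v <= t%:E)%E].

Lemma winv_ge0 : 0 <= winv w t.
Proof.
rewrite /winv; case: asboolP => // -[v Sv].
by apply: lb_le_inf; [exists v | move=> y [/andP[]]].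
Qed.

Lemma winv_le1 : winv w t <= 1.
Proof.
rewrite /winv; case: asboolP => [[v [/andP[v0 v1] wv]]|//].
apply: (le_trans _ v1); apply: ge_inf; first by exists 0 => y [/andP[]].
by split => //; rewrite v0.
Qed.

Hypothesis w_nonincr :
  forall u v : R, 0 <= u -> u <= v -> v <= 1 -> (w v <= w u)%E.

Lemma sublevel_itv :
  exists c, sublevel = [set` Interval (BSide c (winv w t)) (BRight 1)].
Proof.
rewrite /winv; case: asboolP => [[v Sv]|noS]; last first.
  exists false; apply/seteqP; split => x /=.
    by move=> Sx; exfalso; apply: noS; exists x.
  by rewrite in_itv /= => /andP[/lt_le_trans h/h]; rewrite ltxx.
have lbS : has_lbound sublevel by exists 0 => y [/andP[]].
have infS : lbound sublevel (inf sublevel) := ge_inf lbS.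
have gt_inf x : inf sublevel < x -> x <= 1 -> sublevel x.
  move=> /(inf_lt (ex_intro _ v Sv)) [y [/andP[y0 _] wy] yx] x1.
  split; first by rewrite x1 (le_trans y0 (ltW yx)).
  exact: le_trans (w_nonincr y0 (ltW yx) x1) wy.
exists `[< sublevel (inf sublevel) >].
apply/seteqP; split => x /=; rewrite in_itv /=.
- move=> Sx; have [/andP[_ ->] _] := Sx; rewrite andbT.
  case: asboolP => [_|noinf] /=; first exact: infS.
  by rewrite lt_neqAle infS // andbT; apply/eqP => ex; apply: noinf; rewrite ex.
- case: asboolP => [Sinf|_] /= /andP[+ x1]; last by move=> /gt_inf; apply.
  by rewrite le_eqVlt => /predU1P[<-|/gt_inf]; [|apply].
Qed.

Lemma measurable_sublevel : measurable sublevel.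
Proof. by have [c ->] := sublevel_itv; exact: measurable_itv. Qed.

Lemma uniform_prob_sublevelC :
  uniform_prob ltr01 (~` sublevel) = (winv w t)%:E.
Proof.
rewrite (probability_setC (uniform_prob ltr01)) /=; last first.
  exact: measurable_sublevel.
have [c ->] := sublevel_itv.
rewrite uniform_prob_itv_right ?winv_ge0 ?winv_le1 //.
by rewrite subr0 divr1 -EFinB opprB subrKC.
Qed.

End sublevel.

Lemma lt_sale_timeP (R : realType) n (tau : nat -> \bar R) (t : R) :
  (t%:E < sale_time n tau)%E <-> forall i : 'I_n, (t%:E < tau i)%E.
Proof.
split => [/bigmin_gtP[_ lt_tau] i|lt_tau]; first exact: lt_tau.
by apply/bigmin_gtP; split => [|i _]; [exact: ltry|exact: lt_tau].
Qed.

Lemma lt_vbt (R : realType) (w : R -> \bar R) (t v a : R) :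
  (t%:E < vbt w v a)%E = (a <= t) ==> (t%:E < w v)%E.
Proof. by rewrite /vbt lt_max lte_fin implybE -ltNge orbC. Qed.

Lemma lt_sale_time_vbt (R : realType) (w : R -> \bar R) (t : R) n
    (v alpha : nat -> R) : (forall i, 0 <= v i <= 1) ->
  (t%:E < sale_time n (fun i => vbt w (v i) (alpha i)))%E <->
  forall i : 'I_n, alpha i <= t -> (~` sublevel w t) (v i).
Proof.
move=> v01; rewrite lt_sale_timeP; split => lt_tau i.
  move=> ati [_]; apply/negP; rewrite -ltNge.
  by have := lt_tau i; rewrite lt_vbt ati.
rewrite lt_vbt; apply/implyP => /lt_tau notS; rewrite ltNge; apply/negP => wv.
exact: notS (conj (v01 i) wv).
Qed.

Lemma fsbig_setT (R : Type) (idx : R) (op : Monoid.com_law idx) (I : finType)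
    (F : I -> R) :
  \big[op/idx]_(i \in [set: I]) F i = \big[op/idx]_(i : I) F i.
Proof.
rewrite (fsbigE (enum I)) ?enum_uniq //= => [|i _]; last by rewrite mem_enum.
by rewrite big_enum_cond /=; apply: eq_big => // i; rewrite in_setT.
Qed.

Lemma sum_ffun_prod_bool (R : comPzSemiRingType) n (g : bool -> R) :
  \sum_(f : {ffun 'I_n -> bool}) \prod_(i < n) g (f i) =
  (g true + g false) ^+ n.
Proof.
rewrite -(bigA_distr_bigA (fun (i : 'I_n) (b : bool) => g b)) /=.
under eq_bigr do rewrite big_bool.
by rewrite prodr_const card_ord.
Qed.

Lemma measurableT_preimage d d' (T : measurableType d) (U : measurableType d')
    (f : T -> U) (Y : set U) :
  measurable_fun setT f -> measurable Y -> measurable (f @^-1` Y).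
Proof. by move=> mf mY; rewrite -[_ @^-1` _]setTI; exact: mf. Qed.

Lemma measure_partition_nat d (T : measurableType d) (R : realType)
    (mu : {measure set T -> \bar R}) (X : T -> nat) (A : set T) :
  (forall n, measurable (A `&` X @^-1` [set n])) ->
  mu A = (\sum_(n <oo) mu (A `&` X @^-1` [set n]))%E.
Proof.
move=> mAX; have AE : A = \bigcup_n (A `&` X @^-1` [set n]).
  by apply/seteqP; split => [x Ax|x [n _ []]//]; exists (X x).
rewrite {1}AE measure_semi_bigcup //; last exact: bigcup_measurable.
by move=> i j _ _ [x [[_ <-] [_ <-]]].
Qed.

Lemma poisson_pmf_eseriesX (R : realType) (r q : R) : 0 < r ->
  (\sum_(n <oo) (poisson_pmf r n * q ^+ n)%:E)%E = (expR (r * (q - 1)))%:E.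
Proof.
move=> r0.
have partial m : (\sum_(0 <= n < m) (poisson_pmf r n * q ^+ n)%:E)%E =
    (expR (- r) * series (exp_coeff (r * q)) m)%:E.
  rewrite sumEFin /series /= mulr_sumr; congr EFin; apply: eq_bigr => n _.
  by rewrite /poisson_pmf r0 /exp_coeff /= exprMn; ring.
have cvg_exp : series (exp_coeff (r * q)) @ \oo --> expR (r * q).
  rewrite expRE (_ : pseries _ _ = series (exp_coeff (r * q))).
    exact: is_cvg_series_exp_coeff.
  by apply/funext => n; rewrite /pseries exp_coeffE.
apply: cvg_lim => //; rewrite (funext partial).
rewrite mulrBr mulr1 addrC expRD; apply: cvg_EFin; first exact: nearW.
exact: cvgM (cvg_cst _) cvg_exp.
Qed.

Section independent_buyers.
Context (R : realType) (T : R) (hT : 0 < T) (d : measure_display)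
  (Omega : measurableType d) (P : probability Omega R).
Variables (N : Omega -> nat) (alpha v : nat -> Omega -> R).
Hypotheses (mN : measurable_fun setT N)
  (malpha : forall i, measurable_fun setT (alpha i))
  (mv : forall i, measurable_fun setT (v i)).
Hypothesis iid : forall (n : nat) (A B : 'I_n -> set R),
  (forall i, measurable (A i)) -> (forall i, measurable (B i)) ->
  P [set omega | N omega = n /\
                 forall i : 'I_n, A i (alpha i omega) /\ B i (v i omega)]
  = (P [set omega | N omega = n] *
     \prod_(i < n) (uniform_prob hT (A i) * uniform_prob (@ltr01 R) (B i)))%E.
Variables (t k : R) (K : set R).
Hypotheses (t0T : 0 <= t <= T) (mK : measurable K)
  (uK : uniform_prob (@ltr01 R) K = k%:E).

Let early_in n := [set omega | N omega = n /\
  forall i : 'I_n, alpha i omega <= t -> K (v i omega)].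

Let measurable_rectangles n (A B : 'I_n -> set R) :
  (forall i, measurable (A i)) -> (forall i, measurable (B i)) ->
  measurable [set omega | N omega = n /\
                 forall i : 'I_n, A i (alpha i omega) /\ B i (v i omega)].
Proof.
move=> mA mB; have -> : [set omega | N omega = n /\
      forall i : 'I_n, A i (alpha i omega) /\ B i (v i omega)] =
    N @^-1` [set n] `&` \bigcap_(i in [set: 'I_n])
      (alpha i @^-1` A i `&` v i @^-1` B i).
  apply/seteqP; split => omega /= [Nn AB]; split => // i; last exact: AB.
  by move=> _; exact: AB.
apply: measurableI; first exact: measurableT_preimage.
apply: fin_bigcap_measurable; first exact: finite_finset.
by move=> i _; apply: measurableI; exact: measurableT_preimage.
Qed.

(* [piece f] is the part of [early_in n] where buyer [i] arrives by [t]
   exactly when [f i]. *)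
Let arrival (b : bool) : set R :=
  if b then `]-oo, t]%classic else `]t, +oo[%classic.
Let value (b : bool) : set R := if b then K else setT.
Let piece n (f : {ffun 'I_n -> bool}) := [set omega | N omega = n /\
  forall i : 'I_n, arrival (f i) (alpha i omega) /\ value (f i) (v i omega)].

Let early_in_bigcup n :
  early_in n = \bigcup_(f in [set: {ffun 'I_n -> bool}]) piece f.
Proof.
apply/seteqP; split => omega /=.
- move=> [Nn early]; exists [ffun i : 'I_n => alpha i omega <= t] => //.
  split => // i; rewrite ffunE /arrival /value.
  case: ifP => [ati|/negbT]; rewrite /= in_itv /=.
    by split => //; exact: early.
  by rewrite -ltNge andbT.
- move=> [f _ [Nn arrived]]; split => // i ati; have := arrived i.
  rewrite /arrival /value; case: (f i) => /= -[] //.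
  by rewrite in_itv /= andbT ltNge ati.
Qed.

Let piece_trivIset n : trivIset [set: {ffun 'I_n -> bool}] (@piece n).
Proof.
move=> f f' _ _ [omega [[_ Ff] [_ Ff']]]; apply/ffunP => i.
have [+ _] := Ff i; have [+ _] := Ff' i; rewrite /arrival.
case: (f i); case: (f' i) => //=; rewrite !in_itv /= andbT.
  by move=> /lt_le_trans h/h; rewrite ltxx.
by move=> tf /lt_le_trans /(_ tf); rewrite ltxx.
Qed.

Let measurable_arrival b : measurable (arrival b).
Proof. by case: b; exact: measurable_itv. Qed.

Let measurable_value b : measurable (value b).
Proof. by case: b; rewrite /value. Qed.

Let measurable_piece n (f : {ffun 'I_n -> bool}) : measurable (piece f).
Proof.
exact: measurable_rectangles (fun i => measurable_arrival (f i))
                             (fun i => measurable_value (f i)).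
Qed.

Lemma measurable_early_values_in n : measurable
  [set omega | N omega = n /\
     forall i : 'I_n, alpha i omega <= t -> K (v i omega)].
Proof.
rewrite -/(early_in n) early_in_bigcup.
by apply: fin_bigcup_measurable => // f _; exact: measurable_piece.
Qed.

Let g (b : bool) : R := if b then t / T * k else 1 - t / T.

Let uniform_arrival_value b :
  (uniform_prob hT (arrival b) * uniform_prob (@ltr01 R) (value b))%E =
  (g b)%:E.
Proof.
case: b; rewrite /arrival /value /g.
  by rewrite uniform_prob_itvNy // uK !subr0 -EFinM.
rewrite (probability_setT (uniform_prob ltr01)) mule1 -setCitvl.
rewrite (probability_setC (uniform_prob hT)) //=.
by rewrite uniform_prob_itvNy // -EFinB !subr0.
Qed.

Let fin_num_P_Neq n : P [set omega | N omega = n] \is a fin_num.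
Proof.
by apply: fin_num_measure; exact: (measurableT_preimage (Y := [set n]) mN).
Qed.

Lemma prob_early_values_in n :
  P [set omega | N omega = n /\
       forall i : 'I_n, alpha i omega <= t -> K (v i omega)] =
  (P [set omega | N omega = n] * ((1 - t / T + t / T * k) ^+ n)%:E)%E.
Proof.
have P_piece (f : {ffun 'I_n -> bool}) : P (piece f) =
    (fine (P [set omega | N omega = n]) * \prod_(i < n) g (f i))%:E.
  have -> : P (piece f) = _ := iid (fun i => measurable_arrival (f i))
                                   (fun i => measurable_value (f i)).
  under eq_bigr do rewrite uniform_arrival_value.
  by rewrite prodEFin EFinM fineK.
rewrite -/(early_in n) early_in_bigcup measure_fin_bigcup //;
  [|exact: finite_finset|exact: piece_trivIset].
rewrite fsbig_setT (eq_bigr _ (fun f _ => P_piece f)) sumEFin -mulr_sumr.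
by rewrite sum_ffun_prod_bool /g EFinM fineK // addrC.
Qed.

End independent_buyers.

Theorem proposition1 (R : realType) (T lam : R) (hT : 0 < T) (hlam : 0 < lam)
  (w : R -> \bar R) (hw : threshold_time_fun T w) (hreg : regular w)
  (d : measure_display) (Omega : measurableType d) (P : probability Omega R)
  (N : Omega -> nat) (alpha v : nat -> Omega -> R)
  (mN : measurable_fun setT N)
  (malpha : forall i, measurable_fun setT (alpha i))
  (mv : forall i, measurable_fun setT (v i))
  (v01 : forall i omega, 0 <= v i omega <= 1)
  (hN : forall n : nat, P [set omega | N omega = n] = (poisson_pmf (lam * T) n)%:E)
  (hiid : forall (n : nat) (A B : 'I_n -> set R),
     (forall i, measurable (A i)) -> (forall i, measurable (B i)) ->
     P [set omega | N omega = n /\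
                    forall i : 'I_n, A i (alpha i omega) /\ B i (v i omega)]
     = (P [set omega | N omega = n] *
        \prod_(i < n) (uniform_prob hT (A i) * uniform_prob (@ltr01 R) (B i)))%E)
  (t : R) (ht : 0 <= t <= T) :
  P [set omega | (t%:E < sale_time (N omega)
                     (fun i => vbt w (v i omega) (alpha i omega)))%E]
  = (expR (- (lam * t * (1 - winv w t))))%:E.
Proof.
have w_nonincr : forall u v : R, 0 <= u -> u <= v -> v <= 1 -> (w v <= w u)%E.
  by case: hreg.
have mSC := measurableC (measurable_sublevel t w_nonincr).
have no_sale_n n : [set omega | (t%:E < sale_time (N omega)
      (fun i => vbt w (v i omega) (alpha i omega)))%E] `&` N @^-1` [set n] =
    [set omega | N omega = n /\ forall i : 'I_n,
      alpha i omega <= t -> (~` sublevel w t) (v i omega)].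
  apply/seteqP; split => omega /=.
    by move=> [/lt_sale_time_vbt no_sale <-]; split => //; apply: no_sale.
  by move=> [<- early]; split => //; apply/lt_sale_time_vbt.
rewrite (measure_partition_nat (X := N) P) => [|n]; last first.
  by rewrite no_sale_n; exact: measurable_early_values_in.
have -> : - (lam * t * (1 - winv w t)) =
    lam * T * (1 - t / T + t / T * winv w t - 1) by field; rewrite gt_eqF.
rewrite -poisson_pmf_eseriesX ?mulr_gt0 //; apply: eq_eseriesr => n _.
rewrite no_sale_n EFinM -hN.
(* Plain [exact]: after [measure_partition_nat] the goal applies [P] through
   its measure structure, which only conversion identifies with [P]. *)
exact (prob_early_values_in mN malpha mv hiid ht mSC
         (uniform_prob_sublevelC t w_nonincr) n).
Qed.
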